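(* Let $n\ge2$, $\kappa>0$, and let $\tilde\theta:\mathbb R\to[0,\infty)$ be locally Lipschitz and nondecreasing with $\tilde\theta(s)=0$ for $s\le 0$ and $\tilde\theta(s)>0$ for $s>0$; set $\theta(a,b)=\tilde\theta(\min(a,b))$. Let $\rho:[0,\infty)\to\mathbb R^n$ be the solution of $$\frac{d\rho_j}{dt}=\kappa\sum_{k=1}^n\theta(\rho_j,\rho_k)(\rho_j-\rho_k),\qquad j=1,\dots,n,$$ with $\rho(0)\in\mathcal P$ satisfying $\rho_1(0)>\max_{1<j\le n}\rho_j(0)$. Then for all $t\ge0$, $$\rho_1(t)-\max_{1<j\le n}\rho_j(t)\ \ge\ \rho_1(0)-\max_{1<j\le n}\rho_j(0).$$
   Context: $\mathcal P=\{\rho\in\mathbb R^n:\rho_i\ge0\ \forall i,\ \sum_{i=1}^n\rho_i=1\}$ denotes the probability simplex. *)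

From HB Require Import structures.
From mathcomp Require Import all_boot all_order all_algebra.
From mathcomp Require Import all_classical all_reals all_analysis.
Set Implicit Arguments. Unset Strict Implicit. Unset Printing Implicit Defensive.
Import Order.TTheory GRing.Theory Num.Theory.
Import numFieldNormedType.Exports.
Local Open Scope ring_scope.
Local Open Scope classical_set_scope.

Definition locally_lipschitz (R : realType) (f : R -> R) : Prop :=
  forall x : R, exists2 d : R, 0 < d & exists L : R, forall y z : R,
    `|y - x| < d -> `|z - x| < d -> `|f y - f z| <= L * `|y - z|.

Definition in_simplex (R : realType) (n : nat) (p : 'I_n -> R) : Prop :=
  (forall i, 0 <= p i) /\ \sum_(i < n) p i = 1.

Definition theta (R : realType) (tht : R -> R) (a b : R) : R := tht (Num.min a b).

(* indices "1" and "2" of {1,...,n} are the ordinals 0 and 1 of 'I_n *)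
Definition idx1 (n : nat) (hn : (2 <= n)%N) : 'I_n := @Ordinal n 0 (ltn_trans (ltnSn 0) hn).
Definition idx2 (n : nat) (hn : (2 <= n)%N) : 'I_n := @Ordinal n 1 hn.

(* max_{1 < j <= n} v_j  (nonempty range since n >= 2; idx2 is in it) *)
Definition max_others (R : realType) (n : nat) (hn : (2 <= n)%N) (v : 'I_n -> R) : R :=
  \big[Num.max/v (idx2 hn)]_(j | j != idx1 hn) v j.

From HB Require Import structures.
From mathcomp Require Import all_boot all_order all_algebra.
From mathcomp Require Import all_classical all_reals all_analysis.
From mathcomp Require Import ring lra.
Import Order.TTheory GRing.Theory Num.Theory.
Import numFieldNormedType.Exports.
Local Open Scope ring_scope.
Local Open Scope classical_set_scope.

(* Let D(t) = rho_1(t) - max_(j > 1) rho_j(t); it is continuous.  When D(s) > 0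
   and j attains the maximum at time s, g = rho_1 - rho_j lies above D and
   touches it at s, and g'(s) >= 0: term by term, the drift of the runner-up j
   is at most that of the leader (for rho_k <= rho_j both weights equal
   theta~(rho_k), and for k = 1 the leader's term vanishes while the
   runner-up's is <= 0).  A continuous function with such supports cannot drop
   below its initial value: otherwise some line D(0) - e (1 + u) is first
   touched by D at a time s > 0, where the left difference quotients of g are
   <= -e, contradicting g'(s) >= 0. *)

Section real_lemmas.
Context {R : realType}.
Implicit Types (a s t e d : R) (g h D : R -> R).

Lemma is_derive_le_left_slope {g a s e d} :
  a < s -> is_derive s 1 g d ->
  (forall u, a <= u < s -> g s + e * (s - u) <= g u) -> d <= - e.
Proof.
move=> a_lt_s gd g_above.
have dq : (fun x => x^-1 *: ((g \o shift s) (x *: 1) - g s)) @ 0^'- --> d.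
  apply: cvg_dnbhs_at_left; rewrite -(@derive_val _ _ _ _ _ _ _ gd).
  exact: (@ex_derive _ _ _ _ _ _ _ gd).
apply: cvgr_to_le dq _; near=> x.
have x_lt0 : x < 0 by near: x; exact: nbhs_left_lt.
have x_gt : a - s < x by near: x; apply: nbhs_left_gt; lra.
have := g_above (x + s).
rewrite /= [x *: 1]mulr1 -[_ *: _]/(_ * _) [_^-1 * _]mulrC ler_ndivrMr //.
move=> /(_ _); nra.
Unshelve. all: by end_near. Qed.

Lemma first_zero {h t} : 0 <= t -> {within `[0, t], continuous h} ->
  0 < h 0 -> h t <= 0 ->
  exists2 s, 0 < s <= t & h s = 0 /\ forall u, 0 <= u < s -> 0 < h u.
Proof.
move=> t_ge0 h_cont h0_gt0 ht_le0.
pose B := [set u | 0 <= u <= t /\ h u <= 0].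
have hasB : has_inf B.
  by split; [exists t; split; rewrite ?lexx ?t_ge0 | exists 0 => u [/andP[]]].
pose s := inf B.
have s_le u : B u -> s <= u by exact: (ge_inf hasB.2).
have s_ge0 : 0 <= s by apply: lb_le_inf hasB.1 _ => u [/andP[]].
have s_le_t : s <= t by apply: s_le; split; rewrite ?lexx ?t_ge0.
have pos_before u : 0 <= u < s -> 0 < h u.
  move=> /andP[u_ge0 u_lt_s]; rewrite ltNge; apply/negP => hu.
  have : s <= u by apply: s_le; rewrite /B /= u_ge0 hu (ltW (lt_le_trans u_lt_s s_le_t)).
  lra.
have hs_le0 : h s <= 0.
  rewrite leNgt; apply/negP => hs_gt0.
  have s_in : `[0, t] s by rewrite /= in_itv /= s_ge0 s_le_t.
  have /cvgr_gt/(_ _ hs_gt0) := (subspace_continuousP _ _).1 h_cont s s_in.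
  rewrite /within => /nbhs_ballP[d d_gt0 pos_near].
  have [b [/andP[b_ge0 b_le_t] hb_le0] b_lt] := inf_adherent d_gt0 hasB.
  have s_le_b : s <= b by apply: s_le; rewrite /B /= b_ge0 b_le_t.
  have : 0 < h b.
    apply: pos_near; last by rewrite /= in_itv /= b_ge0 b_le_t.
    by rewrite /ball /= distrC ger0_norm ?subr_ge0 // ltrBlDl.
  lra.
have s_gt0 : 0 < s.
  by rewrite lt_neqAle s_ge0 andbT; apply: contraTneq hs_le0 => <-; rewrite -ltNge.
have hs_ge0 : 0 <= h s.
  rewrite leNgt; apply/negP => hs_lt0.
  have sub_t : `[0, s] `<=` `[0, t] by apply: subset_itvl; rewrite bnd_simp.
  have [|c] := IVT s_ge0 (continuous_subspaceW sub_t h_cont) (v := 0).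
    by rewrite ge_min le_max (ltW hs_lt0) (ltW h0_gt0) orbT.
  rewrite in_itv /= => /andP[c_ge0 c_le_s] hc0.
  have c_lt_s : c < s.
    by rewrite lt_neqAle c_le_s andbT; apply: contraTneq hs_lt0 => <-; rewrite hc0 ltxx.
  by have := pos_before c; rewrite c_ge0 c_lt_s hc0 ltxx => /(_ isT).
by exists s; rewrite ?s_gt0 ?s_le_t //; split => //; apply: le_anti; rewrite hs_le0.
Qed.

Lemma init_le_of_upper_supports {D} :
  {within `[0, +oo[, continuous D} -> 0 < D 0 ->
  (forall s, 0 < s -> 0 < D s -> exists g, exists d,
     [/\ is_derive s 1 g d, 0 <= d, g s = D s & forall u, 0 <= u < s -> D u <= g u]) ->
  forall t, 0 <= t -> D 0 <= D t.
Proof.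
move=> D_cont D0_gt0 support t t_ge0; rewrite leNgt; apply/negP => Dt_lt.
set c := D 0 in D0_gt0 Dt_lt *.
pose m := Num.min c (c - D t).
have m_gt0 : 0 < m by rewrite lt_min D0_gt0 subr_gt0.
have [m_le_c m_le_gap] : m <= c /\ m <= c - D t by split; rewrite ge_min lexx ?orbT.
(* The barrier u |-> c - e (1 + u) starts below D 0 and ends above D t. *)
pose e := m / (2 * (1 + t)).
have e_gt0 : 0 < e by rewrite divr_gt0 // mulr_gt0 //; lra.
have e_t : e * (1 + t) = m / 2 by rewrite /e; field; lra.
pose h u := D u - c + e * (1 + u).
have h_cont : {within `[0, t], continuous h}.
  have sub : `[0, t] `<=` `[0, +oo[ by apply: subset_itvl.
  apply/subspace_continuousP => x x_in.
  apply: cvgD; last first.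
    by apply: cvgM; [exact: cvg_cst | apply: cvgD; [exact: cvg_cst | exact: cvg_within]].
  apply: cvgB; last exact: cvg_cst.
  exact: (subspace_continuousP _ _).1 (continuous_subspaceW sub D_cont) x x_in.
have [||s /andP[s_gt0 s_le_t] [hs0 h_pos]] := first_zero t_ge0 h_cont.
- by rewrite /h -/c; lra.
- by rewrite /h; lra.
have Ds_gt0 : 0 < D s.
  have : e * (1 + s) <= e * (1 + t) by rewrite ler_pM2l // lerD2l.
  rewrite /h in hs0; lra.
have [g [d [gd d_ge0 gs g_above]]] := support s s_gt0 Ds_gt0.
have : d <= - e.
  apply: is_derive_le_left_slope s_gt0 gd _ => u u_in.
  have := h_pos u u_in; have := g_above u u_in; rewrite /h in hs0 * => ??.
  nra.
lra.
Qed.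

Lemma bigmax_fun_continuous {X : topologicalType} (I : Type) (r : seq I) (P : pred I)
    (f0 : X -> R) (f : I -> X -> R) :
  continuous f0 -> (forall i, continuous (f i)) ->
  continuous (fun x => \big[Num.max/f0 x]_(i <- r | P i) f i x).
Proof.
move=> f0_cont f_cont; elim: r => [|i r IH]; first by under eq_fun do rewrite big_nil.
under eq_fun do rewrite big_cons.
by case: (P i) => //; exact: max_fun_continuous.
Qed.

End real_lemmas.

Section max_others.
Context {R : realType} {n : nat} (hn : (2 <= n)%N).

Lemma le_max_others (v : 'I_n -> R) k : k != idx1 hn -> v k <= max_others hn v.
Proof. by move=> k_ne1; rewrite /max_others; apply: le_bigmax_cond. Qed.

Lemma max_others_attained (v : 'I_n -> R) :
  exists2 j, j != idx1 hn & max_others hn v = v j.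
Proof.
have [j j_ne1 j_max] := @arg_maxP _ _ _ (idx2 hn) (fun j => j != idx1 hn) v isT.
exists j => //; apply/eqP; rewrite eq_le le_bigmax_cond // andbT.
by apply/bigmax_leP; split; [exact: j_max | move=> i /j_max].
Qed.

Lemma continuous_max_others {X : topologicalType} (f : X -> 'I_n -> R) :
  (forall j, continuous (fun x => f x j)) -> continuous (fun x => max_others hn (f x)).
Proof. by move=> f_cont; apply: bigmax_fun_continuous. Qed.

End max_others.

Lemma theta_drift_le (R : realType) (tht : R -> R) (n : nat) (v : 'I_n -> R) (i j : 'I_n) :
  (forall s, 0 <= tht s) -> v j < v i -> (forall k, k != i -> v k <= v j) ->
  \sum_(k < n) theta tht (v j) (v k) * (v j - v k) <=
  \sum_(k < n) theta tht (v i) (v k) * (v i - v k).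
Proof.
move=> tht_ge0 vj_lt_vi vj_max; apply: ler_sum => k _; rewrite /theta.
have [->|k_ne_i] := eqVneq k i.
  by rewrite subrr mulr0 mulr_ge0_le0 // subr_le0 ltW.
have vk_le_vj := vj_max k k_ne_i.
rewrite !min_r ?(le_trans vk_le_vj (ltW vj_lt_vi)) //.
by rewrite ler_wpM2l // lerD2r ltW.
Qed.

Theorem lemma3p4 (R : realType) (n : nat) (hn : (2 <= n)%N) (kappa : R)
  (tht : R -> R) (rho : R -> 'I_n -> R) :
  0 < kappa ->
  (forall s : R, 0 <= tht s) ->
  locally_lipschitz tht ->
  {homo tht : x y / x <= y} ->
  (forall s : R, s <= 0 -> tht s = 0) ->
  (forall s : R, 0 < s -> 0 < tht s) ->
  (forall j, {within `[0, +oo[, continuous (fun s => rho s j)}) ->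
  (forall (j : 'I_n) (t : R), 0 < t -> is_derive t (1 : R) (fun s => rho s j)
      (kappa * \sum_(k < n) theta tht (rho t j) (rho t k) * (rho t j - rho t k))) ->
  in_simplex (rho 0) ->
  rho 0 (idx1 hn) > max_others hn (rho 0) ->
  forall t : R, 0 <= t ->
    rho t (idx1 hn) - max_others hn (rho t) >= rho 0 (idx1 hn) - max_others hn (rho 0).
Proof.
move=> kappa_gt0 tht_ge0 _ _ _ _ rho_cont rho_deriv _ gap0_gt0 t t_ge0.
pose gap := (fun s => rho s (idx1 hn)) - (fun s => max_others hn (rho s)).
have gap_cont : {within `[0, +oo[, continuous gap}.
  by apply: within_continuousB => //; exact: continuous_max_others.
change (gap 0 <= gap t).
apply: (init_le_of_upper_supports gap_cont) t_ge0 => [|s s_gt0 gap_s_gt0].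
  by rewrite /gap !fctE subr_gt0.
have [j j_ne1 max_j] := max_others_attained hn (rho s).
have other_le_j k : k != idx1 hn -> rho s k <= rho s j.
  by rewrite -max_j; exact: le_max_others.
exists ((fun u => rho u (idx1 hn)) - (fun u => rho u j)); eexists; split.
- exact: is_deriveB (rho_deriv (idx1 hn) _ s_gt0) (rho_deriv j _ s_gt0).
- rewrite -mulrBr; apply: mulr_ge0 (ltW kappa_gt0) _.
  rewrite subr_ge0; apply: theta_drift_le => //.
  by move: gap_s_gt0; rewrite /gap !fctE max_j subr_gt0.
- by rewrite /gap !fctE max_j.
- by move=> u _; rewrite /gap !fctE lerD2l lerN2; exact: le_max_others.
Qed.
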